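(* Let $\mathcal{S},\mathcal{A}$ be finite, $\gamma\in(0,1)$, $\alpha\in(0,1)$, $\zeta>0$, and consider an MDP with $(\tilde r(s,a),\tilde s')\sim P(\cdot,\cdot\mid s,a)$ and bounded rewards. For $V:\mathcal{S}\to\mathbb{R}$ define the operator $$(\mathcal{T}^*V)(s)=V(s)+\max_a 2\zeta\,\mathbb{E}_{r,s'}\big[(1-\alpha)\big(\delta(s,a,r,s')\big)_-+\alpha\big(\delta(s,a,r,s')\big)_+\big],\qquad \delta(s,a,r,s')=r+\gamma V(s')-V(s),$$ where $(r,s')\sim P(\cdot,\cdot\mid s,a)$. Then the optimal dynamic-expectile value function $V^*$ is the unique solution of $\mathcal{T}^*V=V$.
   Context: $(x)_-=\min(x,0)$, $(x)_+=\max(x,0)$. $\rho=\mathrm{Expectile}_\alpha$, where $\mathrm{Expectile}_\alpha[\tilde x]=\arg\min_y(1-\alpha)\mathbb{E}[(\tilde x-y)_-^2]+\alpha\mathbb{E}[(\tilde x-y)_+^2]$. The optimal action-value function $Q^*$ solves $Q^*(s,a)=\rho\big(\tilde r(s,a)+\gamma\max_{a'}Q^*(\tilde s',a')\big)$ ($\rho$ taken over the joint law of $(\tilde r(s,a),\tilde s')$), and $V^*(s)=\max_aQ^*(s,a)$, so that $V^*(s)=\max_a\rho(\tilde r(s,a)+\gamma V^*(\tilde s'))$. *)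

From HB Require Import structures.
From mathcomp Require Import all_boot all_order all_algebra.
From mathcomp Require Import all_classical all_reals all_analysis.
Set Implicit Arguments. Unset Strict Implicit. Unset Printing Implicit Defensive.
Import Order.TTheory GRing.Theory Num.Theory.
Local Open Scope ring_scope.
Local Open Scope classical_set_scope.

Section Defs.
Context {R : realType} {d : measure_display} {Omega : measurableType d}.
Context {S A : finType}.

(* maximum over the (finite, assumed nonempty) action set, as a real number *)
Definition max_act (f : A -> R) : R := fine (\big[Order.max/-oo%E]_(a : A) (f a)%:E)%E.

Definition negp (x : R) : R := Num.min x 0.
Definition posp (x : R) : R := Num.max x 0.

Definition expectile_loss (P : probability Omega R) (alpha : R)
  (X : Omega -> R) (y : R) : \bar R :=
  ((1 - alpha)%:E * \int[P]_w ((negp (X w - y)) ^+ 2)%:E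
   + alpha%:E * \int[P]_w ((posp (X w - y)) ^+ 2)%:E)%E.

Definition is_expectile (P : probability Omega R) (alpha : R)
  (X : Omega -> R) (y : R) : Prop :=
  forall z : R, (expectile_loss P alpha X y <= expectile_loss P alpha X z)%E.

(* The transition law: for each (s,a), the pair (r(s,a), s') is realized as
   (rew s a, next s a) on the probability space (Omega, P). *)
Definition is_optimal_Q (P : probability Omega R) (alpha gamma : R)
  (rew : S -> A -> Omega -> R) (next : S -> A -> Omega -> S)
  (Q : S -> A -> R) : Prop :=
  forall s a, is_expectile P alpha
    (fun w => rew s a w + gamma * max_act (Q (next s a w))) (Q s a).

Definition Tstar (P : probability Omega R) (alpha gamma zeta : R)
  (rew : S -> A -> Omega -> R) (next : S -> A -> Omega -> S)
  (V : S -> R) (s : S) : \bar R :=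
  ((V s)%:E + \big[Order.max/-oo%E]_(a : A)
     ((2 * zeta)%:E * \int[P]_w
        ((1 - alpha) * negp (rew s a w + gamma * V (next s a w) - V s)
         + alpha * posp (rew s a w + gamma * V (next s a w) - V s))%:E))%E.

End Defs.

From HB Require Import structures.
From mathcomp Require Import all_boot all_order all_algebra.
From mathcomp Require Import all_classical all_reals all_analysis.
From mathcomp Require Import lra.
Import Order.TTheory GRing.Theory Num.Theory.
Local Open Scope ring_scope.
Local Open Scope classical_set_scope.

(* Write [asym_sq] for the expectile loss t |-> (1-alpha) t_-^2 + alpha t_+^2
   and [asym_lin] for half its derivative.  The expectile y of X then
   satisfies E[asym_lin (X - y)] = 0, and a fixed point of T^* is exactly
   a V with max_a E[asym_lin (r + gamma V(s') - V(s))] = 0 at every state.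
   Since asym_lin is strongly increasing (slope at least alpha (1 - alpha)),
   comparing two such V at a state where V1 - V2 is maximal, through the action
   attaining the max for V1, shows that gamma < 1 forces V1 <= V2.  Hence the
   condition has at most one solution, and V^* = max_a Q^* is one because
   Q^*(s,a) is the expectile of r + gamma V^*(s') and V^*(s) >= Q^*(s,a). *)

Definition asym_lin {R : realType} (alpha t : R) : R :=
  (1 - alpha) * negp t + alpha * posp t.

Definition asym_sq {R : realType} (alpha t : R) : R :=
  (1 - alpha) * negp t ^+ 2 + alpha * posp t ^+ 2.

Section AsymmetricLoss.
Context {R : realType} {alpha : R}.
Hypothesis halpha : 0 < alpha < 1.

Lemma asym_sq_shift_le (t h : R) :
  asym_sq alpha (t - h) <= asym_sq alpha t - 2 * h * asym_lin alpha t + h ^+ 2.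
Proof.
have [a0 a1] := andP halpha; rewrite /asym_sq /asym_lin /negp /posp.
have [t0|t0] := leP t 0; have [th0|th0] := leP (t - h) 0.
- nra.
- have : 0 <= alpha * (- t * (t - 2 * h)) by apply: mulr_ge0; [lra|nra].
  have : 0 <= (1 - alpha) * (t - h) ^+ 2 by apply: mulr_ge0; [lra|nra].
  nra.
- have : 0 <= (1 - alpha) * (t * (2 * h - t)) by apply: mulr_ge0; [lra|nra].
  have : 0 <= alpha * (t - h) ^+ 2 by apply: mulr_ge0; [lra|nra].
  nra.
- nra.
Qed.

Lemma asym_lin_strong_mono (u t : R) : u <= t ->
  asym_lin alpha u <= asym_lin alpha t - alpha * (1 - alpha) * (t - u).
Proof.
have [a0 a1] := andP halpha; move=> ut; rewrite /asym_lin /negp /posp.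
have : 0 <= (1 - alpha) * ((1 - alpha) * (t - u)) by rewrite !mulr_ge0 //; lra.
have : 0 <= alpha * (alpha * (t - u)) by rewrite !mulr_ge0 //; lra.
have [t0|t0] := leP t 0; have [u0|u0] := leP u 0.
- nra.
- lra.
- have : 0 <= alpha * (alpha * t) by rewrite !mulr_ge0 //; lra.
  have : 0 <= (1 - alpha) * ((1 - alpha) * - u) by rewrite !mulr_ge0 //; lra.
  nra.
- nra.
Qed.

End AsymmetricLoss.

Section MaxAct.
Context {R : realType} {A : finType}.

Lemma max_act_attained (a0 : A) (F : A -> R) : exists a, max_act F = F a.
Proof.
rewrite /max_act; have [a _ ->] := @eq_bigmax _ _ A -oo%E a0 xpredT
  (fun a => (F a)%:E) isT (fun _ _ => leNye _).
by exists a.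
Qed.

Lemma EFin_max_act (a0 : A) (F : A -> R) :
  (max_act F)%:E = (\big[Order.max/-oo%E]_(a : A) (F a)%:E)%E.
Proof.
by rewrite /max_act; have [a _ ->] := @eq_bigmax _ _ A -oo%E a0 xpredT
  (fun a => (F a)%:E) isT (fun _ _ => leNye _).
Qed.

Lemma le_max_act (F : A -> R) (a : A) : F a <= max_act F.
Proof.
by rewrite -lee_fin (EFin_max_act a); exact: (le_bigmax _ (fun a => (F a)%:E)).
Qed.

Lemma max_act_scale (a0 : A) (c : R) (F : A -> R) : 0 <= c ->
  max_act (fun a => c * F a) = c * max_act F.
Proof.
move=> c0; have [a1 ecF] := max_act_attained a0 (fun a => c * F a).
have [a2 eF] := max_act_attained a0 F.
apply/le_anti; rewrite {1}ecF ler_wpM2l ?le_max_act //=.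
by rewrite eF (le_max_act (fun a => c * F a)).
Qed.

End MaxAct.

Section BoundedMeasurable.
Context {R : realType} {d : measure_display} {Omega : measurableType d}.

Definition bounded_measurable (f : Omega -> R) : Prop :=
  measurable_fun setT f /\ exists M, forall w, `|f w| <= M.

Lemma bounded_measurable_cst (c : R) : bounded_measurable (fun _ => c).
Proof. by split; [exact: measurable_cst | exists `|c|]. Qed.

Lemma bounded_measurableD {f g : Omega -> R} : bounded_measurable f ->
  bounded_measurable g -> bounded_measurable (fun w => f w + g w).
Proof.
move=> [mf [M hM]] [mg [N hN]]; split; first exact: measurable_realfun.measurable_funD.
by exists (M + N) => w; apply: le_trans (ler_normD _ _) _; exact: lerD.
Qed.

Lemma bounded_measurableM {f g : Omega -> R} : bounded_measurable f ->
  bounded_measurable g -> bounded_measurable (fun w => f w * g w).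
Proof.
move=> [mf [M hM]] [mg [N hN]]; split; first exact: measurable_realfun.measurable_funM.
by exists (M * N) => w; rewrite normrM ler_pM.
Qed.

Lemma bounded_measurableX {f : Omega -> R} (n : nat) : bounded_measurable f ->
  bounded_measurable (fun w => f w ^+ n).
Proof.
move=> bf; elim: n => [|n IHn].
  by under eq_fun do rewrite expr0; exact: bounded_measurable_cst.
by under eq_fun do rewrite exprS; exact: bounded_measurableM.
Qed.

Lemma bounded_measurable_negp {f : Omega -> R} : bounded_measurable f ->
  bounded_measurable (fun w => negp (f w)).
Proof.
move=> [mf [M hM]]; split; first exact: measurable_realfun.measurable_minr.
exists M => w; apply: le_trans (hM w); rewrite /negp.
by have [|] := leP (f w) 0; rewrite ?normr0.
Qed.

Lemma bounded_measurable_posp {f : Omega -> R} : bounded_measurable f ->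
  bounded_measurable (fun w => posp (f w)).
Proof.
move=> [mf [M hM]]; split; first exact: measurable_realfun.measurable_maxr.
exists M => w; apply: le_trans (hM w); rewrite /posp.
by have [|] := leP (f w) 0; rewrite ?normr0.
Qed.

Lemma bounded_measurable_asym_lin (alpha : R) {f : Omega -> R} :
  bounded_measurable f -> bounded_measurable (fun w => asym_lin alpha (f w)).
Proof.
move=> bf; apply: bounded_measurableD; apply: bounded_measurableM;
  by [exact: bounded_measurable_cst | exact: bounded_measurable_negp |
      exact: bounded_measurable_posp].
Qed.

Lemma bounded_measurable_asym_sq (alpha : R) {f : Omega -> R} :
  bounded_measurable f -> bounded_measurable (fun w => asym_sq alpha (f w)).
Proof.
move=> bf; have bn := bounded_measurable_negp bf; have bp := bounded_measurable_posp bf.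
by apply: bounded_measurableD; apply: bounded_measurableM;
  by [exact: bounded_measurable_cst | exact: bounded_measurableX].
Qed.

Lemma bounded_measurable_comp_finite (S : finType) (V : S -> R) (g : Omega -> S) :
  (forall s, measurable [set w | g w = s]) -> bounded_measurable (fun w => V (g w)).
Proof.
move=> mg; split.
  move=> _ B _; rewrite setTI.
  have -> : (fun w => V (g w)) @^-1` B =
      \bigcup_(s in [set s | B (V s)]) [set w | g w = s].
    by apply/seteqP; split => [w Bw|w [s /= Bs gws]]; [exists (g w) | rewrite gws].
  by apply: fin_bigcup_measurable => //; exact: finite_finset.
exists (\big[Num.max/0]_(s : S) `|V s|) => w.
exact: (le_bigmax 0 (fun s => `|V s|) (g w)).
Qed.

End BoundedMeasurable.

#[local] Hint Resolve bounded_measurable_cst bounded_measurableD bounded_measurableM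
  bounded_measurableX bounded_measurable_negp bounded_measurable_posp
  bounded_measurable_asym_lin bounded_measurable_asym_sq bounded_measurable_comp_finite
  : bounded_measurable.

Section RealExpectation.
Context {R : realType} {d : measure_display} {Omega : measurableType d}.
Variable P : probability Omega R.

Definition rexpect (f : Omega -> R) : R := fine (\int[P]_w (f w)%:E)%E.

Lemma bounded_measurable_integrable (f : Omega -> R) :
  bounded_measurable f -> P.-integrable setT (EFin \o f).
Proof.
move=> [mf [M hM]]; apply: measurable_bounded_integrable => //.
  by apply: (le_lt_trans (probability_le1 P measurableT)); exact: ltry.
exists M; split; first by rewrite num_real.
by move=> M' hM' w _ /=; apply: le_trans (hM w) _; exact: ltW.
Qed.

Lemma EFin_rexpect (f : Omega -> R) : bounded_measurable f ->
  (rexpect f)%:E = (\int[P]_w (f w)%:E)%E.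
Proof.
move=> bf; rewrite /rexpect fineK //.
by apply: integrable_fin_num => //; exact: bounded_measurable_integrable.
Qed.

Lemma rexpectD (f g : Omega -> R) : bounded_measurable f -> bounded_measurable g ->
  rexpect (fun w => f w + g w) = rexpect f + rexpect g.
Proof.
move=> bf bg; rewrite /rexpect; under eq_integral do rewrite EFinD.
rewrite integralD //; try exact: bounded_measurable_integrable.
by rewrite -EFin_rexpect // -EFin_rexpect.
Qed.

Lemma rexpectZ (c : R) (f : Omega -> R) : bounded_measurable f ->
  rexpect (fun w => c * f w) = c * rexpect f.
Proof.
move=> bf; rewrite /rexpect; under eq_integral do rewrite EFinM.
rewrite integralZl //; last exact: bounded_measurable_integrable.
by rewrite -EFin_rexpect.
Qed.

Lemma rexpect_cst (c : R) : rexpect (fun _ => c) = c.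
Proof. by rewrite /rexpect integral_cst // [X in (_ * X)%E]probability_setT mule1. Qed.

Lemma le_rexpect (f g : Omega -> R) : bounded_measurable f -> bounded_measurable g ->
  (forall w, f w <= g w) -> rexpect f <= rexpect g.
Proof.
move=> bf bg fg; rewrite -lee_fin !EFin_rexpect //.
apply: le_integral => //; try exact: bounded_measurable_integrable.
by move=> w _; rewrite lee_fin.
Qed.

End RealExpectation.

Section Expectile.
Context {R : realType} {d : measure_display} {Omega : measurableType d} {alpha : R}.
Variable P : probability Omega R.
Hypothesis halpha : 0 < alpha < 1.

Lemma expectile_lossE (X : Omega -> R) (y : R) : bounded_measurable X ->
  expectile_loss P alpha X y = (rexpect P (fun w => asym_sq alpha (X w - y)))%:E.
Proof.
move=> bX; rewrite /expectile_loss -!EFin_rexpect -?EFinM -?EFinD /asym_sq;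
  try solve [auto 6 with bounded_measurable].
by rewrite rexpectD ?rexpectZ //; auto 7 with bounded_measurable.
Qed.

(* Shifting y by g := E[asym_lin (X - y)] lowers the loss by at least g^2. *)
Lemma expectile_first_order (X : Omega -> R) (y : R) : bounded_measurable X ->
  is_expectile P alpha X y -> rexpect P (fun w => asym_lin alpha (X w - y)) = 0.
Proof.
move=> bX hy; set g := rexpect P _.
have shift : rexpect P (fun w => asym_sq alpha (X w - (y + g)))
    <= rexpect P (fun w => asym_sq alpha (X w - y)) - g ^+ 2.
  have lin : rexpect P (fun w => - (2 * g) * asym_lin alpha (X w - y) + g ^+ 2)
      = - g ^+ 2.
    rewrite rexpectD ?rexpectZ ?rexpect_cst -/g; auto with bounded_measurable.
    lra.
  rewrite -lin -rexpectD; auto 6 with bounded_measurable.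
  apply: le_rexpect; auto 6 with bounded_measurable => w.
  have := asym_sq_shift_le halpha (X w - y) g.
  by rewrite opprD addrA; lra.
have := hy (y + g); rewrite !expectile_lossE // lee_fin => opt.
by apply/eqP; rewrite -sqrf_eq0 eq_le sqr_ge0 andbT; lra.
Qed.

Lemma rexpect_asym_lin_strong_mono (X Y : Omega -> R) (k : R) :
  bounded_measurable X -> bounded_measurable Y -> 0 <= k ->
  (forall w, X w <= Y w - k) ->
  rexpect P (fun w => asym_lin alpha (X w))
    <= rexpect P (fun w => asym_lin alpha (Y w)) - alpha * (1 - alpha) * k.
Proof.
move=> bX bY k0 XY; have [a0 a1] := andP halpha.
rewrite -[X in _ <= _ + X](rexpect_cst P) -rexpectD; auto with bounded_measurable.
apply: le_rexpect; auto with bounded_measurable => w.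
have XYw : X w <= Y w by have := XY w; lra.
have := asym_lin_strong_mono halpha _ _ XYw.
have : 0 <= alpha * (1 - alpha) * (Y w - X w - k).
  by rewrite !mulr_ge0 //; have := XY w; lra.
nra.
Qed.

End Expectile.

Section DynamicExpectile.
Context {R : realType} {d : measure_display} {Omega : measurableType d}.
Context {S A : finType}.
Variables (P : probability Omega R) (a0 : A).
Variables (gamma alpha zeta : R).
Hypotheses (hgamma : 0 < gamma < 1) (halpha : 0 < alpha < 1) (hzeta : 0 < zeta).
Variables (rew : S -> A -> Omega -> R) (next : S -> A -> Omega -> S).
Hypothesis brew : forall s a, bounded_measurable (rew s a).
Hypothesis mnext : forall s a s', measurable [set w | next s a w = s'].

Definition target (V : S -> R) (s : S) (a : A) (w : Omega) : R :=
  rew s a w + gamma * V (next s a w).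

Definition score (V : S -> R) (s : S) (a : A) (y : R) : R :=
  rexpect P (fun w => asym_lin alpha (target V s a w - y)).

Definition bellman_expectile (V : S -> R) : Prop :=
  forall s, max_act (fun a => score V s a (V s)) = 0.

Lemma bounded_measurable_target V s a : bounded_measurable (target V s a).
Proof. rewrite /target; auto with bounded_measurable. Qed.

#[local] Hint Resolve bounded_measurable_target : bounded_measurable.

Lemma TstarE V s : Tstar P alpha gamma zeta rew next V s =
  (V s + 2 * zeta * max_act (fun a => score V s a (V s)))%:E.
Proof.
have z2 : 0 <= 2 * zeta by rewrite mulr_ge0 // ltW.
rewrite -(max_act_scale a0) // EFinD (EFin_max_act a0); congr (_ + _)%E.
by apply: eq_bigr => a _; rewrite [RHS]EFinM /score EFin_rexpect;
  auto with bounded_measurable.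
Qed.

Lemma Tstar_fixpointP V :
  (forall s, Tstar P alpha gamma zeta rew next V s = (V s)%:E) <-> bellman_expectile V.
Proof.
have z2 : 2 * zeta != 0 by rewrite mulf_neq0 // gt_eqF.
split=> hV s; last by rewrite TstarE hV mulr0 addr0.
have := hV s; rewrite TstarE => -[/(congr1 (fun x => x - V s))].
by rewrite addrAC !subrr add0r => /eqP; rewrite mulf_eq0 (negPf z2) => /eqP.
Qed.

Lemma bellman_expectile_max_act (Q : S -> A -> R) :
  is_optimal_Q P alpha gamma rew next Q ->
  bellman_expectile (fun s => max_act (Q s)).
Proof.
move=> hQ s; set V := fun s => max_act (Q s).
have scoreQ a : score V s a (Q s a) = 0.
  exact: expectile_first_order (bounded_measurable_target V s a) (hQ s a).
have [a Qa] := max_act_attained a0 (Q s).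
apply/le_anti/andP; split.
  have [b ->] := max_act_attained a0 (fun a => score V s a (V s)).
  have : score V s b (V s) <= score V s b (Q s b) - alpha * (1 - alpha) * 0.
    apply: rexpect_asym_lin_strong_mono; auto using lexx with bounded_measurable.
    by move=> w; have := le_max_act (Q s) b; rewrite /V subr0; lra.
  by rewrite scoreQ mulr0 subr0.
by rewrite -(scoreQ a) -Qa (le_max_act (fun a => score V s a (V s))).
Qed.

(* The discount gamma < 1 leaves a margin (1 - gamma)(V1 - V2)(s1) at a state s1
   maximising V1 - V2, through an action that attains the max for V1. *)
Lemma bellman_expectile_le V1 V2 :
  bellman_expectile V1 -> bellman_expectile V2 -> forall s, V1 s <= V2 s.
Proof.
move=> h1 h2 s; have [g0 g1] := andP hgamma; have [al0 al1] := andP halpha.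
have [s1 _ s1max] := @arg_maxP _ _ S s xpredT (fun i => V1 i - V2 i) isT.
have := s1max s isT; rewrite /=; case: (leP (V1 s1 - V2 s1) 0) => [|pos]; first lra.
have [a ha] := max_act_attained a0 (fun a => score V1 s1 a (V1 s1)).
have k0 : 0 <= (1 - gamma) * (V1 s1 - V2 s1) by rewrite mulr_ge0 //; lra.
have contract w : target V1 s1 a w - V1 s1
    <= target V2 s1 a w - V2 s1 - (1 - gamma) * (V1 s1 - V2 s1).
  have := s1max (next s1 a w) isT; rewrite /target /= => hw.
  have : gamma * (V1 (next s1 a w) - V2 (next s1 a w)) <= gamma * (V1 s1 - V2 s1).
    by rewrite ler_wpM2l //; lra.
  nra.
have : score V1 s1 a (V1 s1) <= score V2 s1 a (V2 s1)
    - alpha * (1 - alpha) * ((1 - gamma) * (V1 s1 - V2 s1)).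
  by apply: rexpect_asym_lin_strong_mono; auto with bounded_measurable.
rewrite -ha h1.
have : 0 < alpha * (1 - alpha) * ((1 - gamma) * (V1 s1 - V2 s1)).
  by rewrite !mulr_gt0 //; lra.
have := le_max_act (fun a => score V2 s1 a (V2 s1)) a; rewrite h2 /=; lra.
Qed.

End DynamicExpectile.

Theorem lemma10 (R : realType) (d : measure_display) (Omega : measurableType d)
  (P : probability Omega R) (S A : finType) (a0 : A)
  (gamma alpha zeta : R)
  (hgamma : 0 < gamma < 1) (halpha : 0 < alpha < 1) (hzeta : 0 < zeta)
  (rew : S -> A -> Omega -> R) (next : S -> A -> Omega -> S)
  (hrew_meas : forall s a, measurable_fun setT (rew s a))
  (hnext_meas : forall s a s', measurable [set w | next s a w = s'])
  (hbounded : exists M : R, forall s a w, `|rew s a w| <= M)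
  (Qstar : S -> A -> R)
  (hQ : is_optimal_Q P alpha gamma rew next Qstar) :
  let Vstar := fun s => max_act (Qstar s) in
  (forall s, Tstar P alpha gamma zeta rew next Vstar s = (Vstar s)%:E) /\
  (forall V : S -> R,
     (forall s, Tstar P alpha gamma zeta rew next V s = (V s)%:E) -> V = Vstar).
Proof.
move=> Vstar.
have brew s a : bounded_measurable (rew s a).
  by have [M hM] := hbounded; split => //; exists M.
have fixP := Tstar_fixpointP P a0 gamma alpha _ hzeta _ _ brew hnext_meas.
have bellman_le := bellman_expectile_le P a0 _ _ hgamma halpha _ _ brew hnext_meas.
have bellman_Vstar : bellman_expectile P gamma alpha rew next Vstar.
  exact: bellman_expectile_max_act P a0 _ _ halpha _ _ brew hnext_meas _ hQ.
split=> [|V /fixP bellman_V]; first exact/fixP.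
by apply/funext => s; apply/le_anti; rewrite !bellman_le.
Qed.
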